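(* Every $A \in \overline{\square}_\vee$ is a retract in $\mathbf{SLat}$ of $[1]^n$ for some $n \in \mathbb{N}$.
   Context: $\mathbf{SLat}$ is the category of (join-)semilattices—sets with an associative, commutative, idempotent binary operation $\vee$—and homomorphisms preserving $\vee$ (not necessarily preserving bounds or meets). Each semilattice is a poset via $x\le y\iff x\vee y=y$. $\overline{\square}_\vee$ is the full subcategory of $\mathbf{SLat}$ on the finite inhabited semilattices whose induced poset is a distributive lattice. $[1]=\{0<1\}$ with $\vee=\max$, and $[1]^n$ has the pointwise structure. *)

From mathcomp Require Import all_boot.
Set Implicit Arguments. Unset Strict Implicit. Unset Printing Implicit Defensive.

Definition is_semilattice (T : Type) (j : T -> T -> T) : Prop :=
  (forall x y z, j x (j y z) = j (j x y) z) /\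
  (forall x y, j x y = j y x) /\
  (forall x, j x x = x).

Definition sl_le (T : Type) (j : T -> T -> T) (x y : T) : Prop := j x y = y.

Definition is_meet (T : Type) (j : T -> T -> T) (x y m : T) : Prop :=
  sl_le j m x /\ sl_le j m y /\
  (forall z, sl_le j z x -> sl_le j z y -> sl_le j z m).

Definition sl_distributive_lattice (T : Type) (j : T -> T -> T) : Prop :=
  (forall x y, exists m, is_meet j x y m) /\
  (forall x y z m1 m2 m3,
      is_meet j x (j y z) m1 -> is_meet j x y m2 -> is_meet j x z m3 ->
      m1 = j m2 m3).

Definition sl_hom (T U : Type) (jT : T -> T -> T) (jU : U -> U -> U)
  (f : T -> U) : Prop := forall x y, f (jT x y) = jU (f x) (f y).

(* [1]^n : functions 'I_n -> bool with the pointwise max (= orb). *)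
Definition cube (n : nat) := {ffun 'I_n -> bool}.
Definition cube_join (n : nat) (u v : cube n) : cube n :=
  [ffun i => u i || v i].

(** Call [t] join-prime if [t <= x \/ y] forces [t <= x] or [t <= y].  In a
    finite distributive lattice every [x] is the join of the join-primes
    below it: if [x] is not join-prime then [x <= a \/ b] with [x] below
    neither, and distributivity gives [x = (x /\ a) \/ (x /\ b)] with both
    terms strictly below [x], so induction on the size of the down-set
    applies.  Sending [x] to the set of join-primes below it is a
    join-homomorphism into the cube indexed by [T], precisely by
    join-primality, and taking the join of a subset is a join-homomorphism
    back which undoes it. *)
From mathcomp Require Import all_boot.
Set Implicit Arguments. Unset Strict Implicit. Unset Printing Implicit Defensive.

Section FiniteSemilattice.

Variables (T : finType) (j : T -> T -> T).
Hypothesis j_semilattice : is_semilattice j.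

Let joinA : associative j := j_semilattice.1.
Let joinC : commutative j := j_semilattice.2.1.
Let joinxx : idempotent_op j := j_semilattice.2.2.

Definition sl_leb (x y : T) : bool := j x y == y.

Local Notation "x <=j y" := (sl_leb x y) (at level 70).

Lemma sl_lebP x y : reflect (sl_le j x y) (x <=j y).
Proof. exact: eqP. Qed.

Lemma sl_lebb x : x <=j x.
Proof. by rewrite /sl_leb joinxx. Qed.

Lemma sl_leb_trans y x z : x <=j y -> y <=j z -> x <=j z.
Proof. by move=> /eqP xy /eqP yz; rewrite /sl_leb -yz joinA xy. Qed.

Lemma sl_leb_anti x y : x <=j y -> y <=j x -> x = y.
Proof. by move=> /eqP xy /eqP yx; rewrite -[LHS]yx joinC xy. Qed.

Lemma sl_leb_joinl x y : x <=j j x y.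
Proof. by rewrite /sl_leb joinA joinxx. Qed.

Lemma sl_leb_joinr x y : y <=j j x y.
Proof. by rewrite joinC sl_leb_joinl. Qed.

Lemma sl_leb_join x y z : x <=j z -> y <=j z -> j x y <=j z.
Proof. by move=> /eqP xz /eqP yz; rewrite /sl_leb -joinA yz xz. Qed.

Definition join_prime (t : T) : bool :=
  [forall x, forall y, (t <=j j x y) ==> (t <=j x) || (t <=j y)].

Lemma join_prime_leb_join t x y :
  join_prime t -> (t <=j j x y) = (t <=j x) || (t <=j y).
Proof.
move=> /forallP/(_ x)/forallP/(_ y) prime_t; apply/idP/idP; first exact/implyP.
by case/orP=> le_t; apply: sl_leb_trans le_t _; rewrite ?sl_leb_joinl ?sl_leb_joinr.
Qed.

Definition primes_below (x : T) : cube #|T| :=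
  [ffun i => (enum_val i <=j x) && join_prime (enum_val i)].

Lemma primes_below_hom : sl_hom j (@cube_join _) primes_below.
Proof.
move=> x y; apply/ffunP => i; rewrite !ffunE.
by case: (boolP (join_prime _)) => [/join_prime_leb_join -> | _]; rewrite ?andbT ?andbF.
Qed.

Section Bottom.

Hypothesis j_meet : forall x y, exists m, is_meet j x y m.

Lemma exists_bottom (a0 : T) : exists bot : T, left_id bot j.
Proof.
suff [bot botL] : exists bot, {in enum T, forall x, j bot x = x}.
  by exists bot => x; apply: botL; rewrite mem_enum.
elim: (enum T) => [|x s [b bL]]; first by exists a0.
have [m [m_le_x [m_le_b _]]] := j_meet x b.
exists m => y; rewrite inE => /predU1P[-> //|ys].
by rewrite -(bL y ys) joinA m_le_b.
Qed.

End Bottom.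

Section BigJoin.

Variables (bot : T) (joinbot : left_id bot j).

Definition bigjoin (P : pred T) : T := \big[j/bot]_(t | P t) t.

Lemma bigjoin_ub (P : pred T) t : P t -> t <=j bigjoin P.
Proof.
rewrite /bigjoin; have : t \in index_enum T by rewrite mem_index_enum.
elim: (index_enum T) => [|u r IHr] //; rewrite inE big_cons.
case/predU1P=> [<- -> | /IHr le_t /le_t]; first exact: sl_leb_joinl.
by case: ifP => // _ /sl_leb_trans; apply; apply: sl_leb_joinr.
Qed.

Lemma bigjoin_lub (P : pred T) z : (forall t, P t -> t <=j z) -> bigjoin P <=j z.
Proof.
move=> le_z; apply: (big_ind (fun x => x <=j z)) => //.
  by rewrite /sl_leb joinbot.
by move=> x y; apply: sl_leb_join.
Qed.

Lemma bigjoin_predU (P Q : pred T) :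
  bigjoin (predU P Q) = j (bigjoin P) (bigjoin Q).
Proof.
apply: sl_leb_anti.
  apply: bigjoin_lub => t /orP[] Pt.
    by apply: sl_leb_trans (sl_leb_joinl _ _); apply: bigjoin_ub.
  by apply: sl_leb_trans (sl_leb_joinr _ _); apply: bigjoin_ub.
by apply: sl_leb_join; apply: bigjoin_lub => t Pt; apply: bigjoin_ub; rewrite /= Pt ?orbT.
Qed.

Definition join_of_cube (u : cube #|T|) : T := bigjoin (fun t => u (enum_rank t)).

Lemma join_of_cube_hom : sl_hom (@cube_join _) j join_of_cube.
Proof.
move=> u v; rewrite /join_of_cube -bigjoin_predU.
by apply: eq_bigl => t; rewrite ffunE.
Qed.

End BigJoin.

Section Distributive.

Hypothesis j_distr : sl_distributive_lattice j.

Lemma not_join_prime_split x :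
  ~~ join_prime x ->
  exists a b, [/\ a <=j x, ~~ (x <=j a), b <=j x, ~~ (x <=j b) & x = j a b].
Proof.
have [j_meet meet_distr] := j_distr.
rewrite negb_forall => /existsP[a]; rewrite negb_forall => /existsP[b].
rewrite negb_imply negb_or => /and3P[/sl_lebP x_le_ab x_nle_a x_nle_b].
have [ma ma_meet] := j_meet x a; have [mb mb_meet] := j_meet x b.
have x_meet : is_meet j x (j a b) x by split; [exact: joinxx | split].
have x_nle_below m c : sl_le j m c -> ~~ (x <=j c) -> ~~ (x <=j m).
  by move=> /sl_lebP m_le_c; apply: contra => /sl_leb_trans; apply.
exists ma, mb; split.
- exact/sl_lebP/ma_meet.1.
- exact: x_nle_below ma_meet.2.1 x_nle_a.
- exact/sl_lebP/mb_meet.1.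
- exact: x_nle_below mb_meet.2.1 x_nle_b.
- exact: meet_distr x_meet ma_meet mb_meet.
Qed.

Variables (bot : T) (joinbot : left_id bot j).

Definition down (x : T) : pred T := [pred y | y <=j x].

Lemma card_down_lt x y : x <=j y -> ~~ (y <=j x) -> #|down x| < #|down y|.
Proof.
move=> x_le_y y_nle_x; apply/proper_card/properP; split.
  by apply/subsetP => z /sl_leb_trans; apply.
by exists y; rewrite inE ?sl_lebb.
Qed.

Definition join_primes_below (x : T) : T :=
  bigjoin bot (fun t => (t <=j x) && join_prime t).

Lemma join_primes_below_mono x y :
  x <=j y -> join_primes_below x <=j join_primes_below y.
Proof.
move=> x_le_y; apply: bigjoin_lub => // t /andP[t_le_x prime_t].
by apply: bigjoin_ub => //; rewrite prime_t (sl_leb_trans t_le_x).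
Qed.

Lemma leb_join_primes_below x : x <=j join_primes_below x.
Proof.
elim: {x}_.+1 {-2}x (ltnSn #|down x|) => // n IHn x; rewrite ltnS => card_x.
have [prime_x | /not_join_prime_split] := boolP (join_prime x).
  by apply: bigjoin_ub; rewrite sl_lebb.
move=> [a [b [a_le_x x_nle_a b_le_x x_nle_b x_ab]]].
have IHlt y : y <=j x -> ~~ (x <=j y) -> y <=j join_primes_below x.
  move=> y_le_x x_nle_y; apply: sl_leb_trans (join_primes_below_mono y_le_x).
  exact/IHn/(leq_trans (card_down_lt y_le_x x_nle_y)).
by rewrite {1}x_ab; apply: sl_leb_join; apply: IHlt.
Qed.

Lemma join_primes_belowE x : join_primes_below x = x.
Proof.
apply: sl_leb_anti (leb_join_primes_below x).
by apply: bigjoin_lub => // t /andP[].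
Qed.

Lemma primes_belowK : cancel primes_below (join_of_cube bot).
Proof.
move=> x; rewrite -[RHS]join_primes_belowE.
by apply: eq_bigl => t; rewrite ffunE enum_rankK.
Qed.

End Distributive.
End FiniteSemilattice.

Theorem mainTheorem7 (T : finType) (j : T -> T -> T) (a0 : T) :
  is_semilattice j -> sl_distributive_lattice j ->
  exists (n : nat) (s : T -> cube n) (r : cube n -> T),
    sl_hom j (@cube_join n) s /\ sl_hom (@cube_join n) j r /\
    (forall x, r (s x) = x).
Proof.
move=> j_semilattice j_distr.
have [bot joinbot] := exists_bottom j_semilattice j_distr.1 a0.
exists #|T|, (primes_below j), (join_of_cube j bot); split; last split.
- exact: primes_below_hom.
- exact: join_of_cube_hom.
- exact: primes_belowK.
Qed.
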